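(* A poset $(\Lambda,\le)$ is interval-finite and good if and only if every finitely generated ideal $\Gamma\subseteq\Lambda$ has a descending chain of finitely generated subideals $\Gamma=\Gamma_0\supseteq\Gamma_1\supseteq\Gamma_2\supseteq\cdots$ such that $|\Gamma_k\setminus\Gamma_{k+1}|<\infty$ for every $k\ge0$ and $\bigcap_{k\ge0}\Gamma_k=\emptyset$. Moreover, this chain can be chosen so that for each $k\ge0$ the elements of $\Gamma_k\setminus\Gamma_{k+1}$ are pairwise incomparable generators of $\Gamma_k$.
   Context: For a poset, $(\gamma]=\{\mu\mid\mu\le\gamma\}$; an ideal is a downward closed subset, finitely generated if it is $\bigcup_{i=1}^t(\lambda_i]$ for finitely many $\lambda_i$; a generator of an ideal $\Gamma$ is an element of a generating set. Interval-finite means every closed interval $[\mu,\lambda]$ is finite. An element $\mu$ is a predecessor of $\lambda$ if $\mu<\lambda$ and there is no $\pi$ with $\mu<\pi<\lambda$. A poset is good if (1) each non-minimal element has at least one but only finitely many predecessors, and (2) whenever $\mu<\lambda$ there is a predecessor $\lambda'$ of $\lambda$ with $\mu\le\lambda'$. *)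

From mathcomp Require Import all_boot all_order.
Set Implicit Arguments. Unset Strict Implicit. Unset Printing Implicit Defensive.
Import Order.Theory.
Local Open Scope order_scope.

Section PosetDefs.
Context {d : Order.disp_t} {T : porderType d}.

Definition finite_sub (A : T -> Prop) : Prop :=
  exists s : seq T, forall x, A x -> x \in s.

Definition downset (g : T) : T -> Prop := fun mu => mu <= g.

Definition ideal (G : T -> Prop) : Prop :=
  forall x y, y <= x -> G x -> G y.

Definition fg_ideal (G : T -> Prop) : Prop :=
  exists s : seq T, forall x, G x <-> exists2 l, l \in s & x <= l.

(* generator of a finitely generated ideal G: an element of its (unique,
   irredundant) generating set, i.e. a maximal element of G. *)
Definition generator (G : T -> Prop) (g : T) : Prop :=
  G g /\ forall x, G x -> g <= x -> x = g.

Definition interval_finite : Prop :=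
  forall mu lam : T, finite_sub (fun x => mu <= x <= lam).

Definition predecessor (mu lam : T) : Prop :=
  mu < lam /\ ~ (exists pi, mu < pi < lam).

Definition minimal (lam : T) : Prop := ~ (exists mu, mu < lam).

Definition good : Prop :=
  (forall lam : T, ~ minimal lam ->
     (exists mu, predecessor mu lam) /\ finite_sub (fun mu => predecessor mu lam))
  /\ (forall mu lam : T, mu < lam -> exists lam', predecessor lam' lam /\ mu <= lam').

Definition good_chain (G : T -> Prop) (C : nat -> T -> Prop) : Prop :=
  (forall x, C 0 x <-> G x)
  /\ (forall k, fg_ideal (C k))
  /\ (forall k x, C k.+1 x -> C k x)
  /\ (forall k, finite_sub (fun x => C k x /\ ~ C k.+1 x))
  /\ (forall x, exists k, ~ C k x).

Definition strong_chain (G : T -> Prop) (C : nat -> T -> Prop) : Prop :=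
  good_chain G C
  /\ (forall k x, C k x -> ~ C k.+1 x -> generator (C k) x)
  /\ (forall k x y, C k x -> ~ C k.+1 x -> C k y -> ~ C k.+1 y ->
        x <= y -> x = y).

End PosetDefs.

From mathcomp Require Import all_boot all_order.
From Stdlib Require Import Classical.
Set Implicit Arguments. Unset Strict Implicit. Unset Printing Implicit Defensive.
Import Order.Theory.

(* Forward direction: for an ideal generated by s, let Gamma_k be the ideal
   generated by the elements reached from s by exactly k predecessor steps.
   Goodness makes each generating layer finite and forces every element of
   Gamma_k \ Gamma_(k+1) to be one of its generators; a point x that stayed in
   every Gamma_k would lie below a descending predecessor chain of every
   length inside some interval [x, l] with l in s, contradicting
   interval-finiteness.
   Backward direction: [mu, lam] lies in Gamma_0 \ Gamma_k for the chain of
   (lam] and any k with mu outside Gamma_k; a predecessor of lam is either in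
   some finite difference Gamma_j \ Gamma_(j+1) or a generator of Gamma_(j+1),
   where j is the step at which lam itself leaves the chain. *)

Lemma count_lt_subpred (X : eqType) (a b : pred X) (z : X) (s : seq X) :
  subpred a b -> b z -> ~~ a z -> z \in s -> (count a s < count b s)%N.
Proof.
move=> ab bz naz; elim: s => [//|y s IH]; rewrite in_cons /=.
case/orP=> [/eqP <-|zs].
  by rewrite bz (negbTE naz) add0n add1n ltnS sub_count.
have := IH zs; case ay: (a y); first by rewrite (ab _ ay) ltn_add2l.
by rewrite add0n => lt_ab; rewrite (leq_trans lt_ab (leq_addl _ _)).
Qed.

Section FiniteSubsets.
Local Open Scope order_scope.
Context {d : Order.disp_t} {T : porderType d}.
Implicit Types (A B : T -> Prop) (G : T -> Prop).

Lemma finite_subS A B : (forall x, A x -> B x) -> finite_sub B -> finite_sub A.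
Proof. by move=> AB [s Bs]; exists s => x /AB /Bs. Qed.

Lemma finite_subU A B : finite_sub A -> finite_sub B -> finite_sub (fun x => A x \/ B x).
Proof.
by move=> [s As] [t Bt]; exists (s ++ t) => x [/As|/Bt] x_in; rewrite mem_cat x_in ?orbT.
Qed.

Lemma finite_sub_bigcup (F : T -> T -> Prop) (s : seq T) :
  (forall q, q \in s -> finite_sub (F q)) ->
  finite_sub (fun x => exists2 q, q \in s & F q x).
Proof.
elim: s => [|a s IH] finF; first by exists [::] => x [].
apply: (finite_subS (B := fun x => F a x \/ exists2 q, q \in s & F q x)).
  by move=> x [q]; rewrite in_cons => /predU1P [->|qs] Fx; [left|right; exists q].
apply: finite_subU; first by apply: finF; rewrite mem_head.
by apply: IH => q qs; apply: finF; rewrite in_cons qs orbT.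
Qed.

Lemma finite_sub_enum A : finite_sub A -> exists s : seq T, forall x, A x <-> x \in s.
Proof.
move=> [s As].
suff [t At] : exists t : seq T, forall x, A x /\ x \in s <-> x \in t.
  by exists t => x; rewrite -At; split=> [Ax|[]//]; split=> //; apply: As.
elim: s {As} => [|a s [t At]]; first by exists [::] => x; split=> [[]|].
have [Aa|nAa] := classic (A a); [exists (a :: t) | exists t] => x; rewrite !in_cons.
- split=> [[Ax /predU1P [->|/(conj Ax)/At ->]]|/predU1P [->|/At [Ax ->]]];
    by rewrite ?eqxx ?orbT.
- split=> [[Ax /predU1P [eq_xa|/(conj Ax)/At //]]|/At [Ax ->]]; last by rewrite orbT.
  by subst.
Qed.

Lemma fg_idealW G : fg_ideal G -> ideal G.
Proof.
by move=> [s Gs] x y yx /Gs [l ls xl]; apply/Gs; exists l; rewrite ?(le_trans yx).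
Qed.

Lemma fg_ideal_downset (lam : T) : fg_ideal (downset lam).
Proof.
exists [:: lam] => x; split=> [xl|[l]]; first by exists lam; rewrite ?mem_head.
by rewrite inE => /eqP->.
Qed.

End FiniteSubsets.

Section GoodChains.
Local Open Scope order_scope.
Context {d : Order.disp_t} {T : porderType d}.
Variables (G : T -> Prop) (C : nat -> T -> Prop).
Hypothesis chainC : good_chain G C.

Lemma good_chain_sub0 k x : C k x -> G x.
Proof.
case: chainC => C0 [_ [decC _]]; rewrite -C0.
by elim: k => [//|k IH] /decC; apply: IH.
Qed.

Lemma good_chain_diff_finite k : finite_sub (fun x => G x /\ ~ C k x).
Proof.
case: chainC => C0 [_ [_ [finC _]]]; elim: k => [|k IH].
  by exists [::] => x []; rewrite -C0.
apply: (finite_subS (B := fun x => (G x /\ ~ C k x) \/ (C k x /\ ~ C k.+1 x))).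
  by move=> x [Gx nCx]; have [Ckx|nCkx] := classic (C k x); [right|left].
exact: finite_subU.
Qed.

Lemma good_chain_leave x : G x -> exists k, C k x /\ ~ C k.+1 x.
Proof.
case: chainC => C0 [_ [_ [_ emptyC]]] Gx; have [k nCk] := emptyC x.
elim: k nCk => [|k IH] nCk; first by rewrite C0 in nCk.
by have [Ck|nCkx] := classic (C k x); [exists k | apply: IH].
Qed.

End GoodChains.

Section PredecessorChains.
Local Open Scope order_scope.
Context {d : Order.disp_t} {T : porderType d}.
Hypothesis IF : @interval_finite d T.

Lemma interval_finite_predecessor (mu lam : T) :
  mu < lam -> exists lam', predecessor lam' lam /\ mu <= lam'.
Proof.
move=> mu_lam; have [L inL] := IF mu lam.
suff: forall x, mu <= x -> x < lam -> exists2 lam', predecessor lam' lam & x <= lam'.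
  by move=> /(_ mu (lexx mu) mu_lam) [lam' ? ?]; exists lam'.
move=> x; have [n] := ubnP (count (> x) L).
elim: n x => [//|n IH] x cnt_x mu_x x_lam.
have [[pi /andP[x_pi pi_lam]]|no_pi] := classic (exists pi, x < pi < lam); last first.
  by exists x => //; split.
have mu_pi : mu <= pi by rewrite (le_trans mu_x (ltW x_pi)).
have cnt_pi : (count (> pi) L < count (> x) L)%N.
  apply: (count_lt_subpred (z := pi)); rewrite /= ?ltxx //.
    by move=> y /= /(lt_trans x_pi).
  by apply: inL; rewrite mu_pi ltW.
have [lam' pred_lam' pi_lam'] := IH pi (leq_trans cnt_pi cnt_x) mu_pi pi_lam.
by exists lam' => //; rewrite (le_trans (ltW x_pi)).
Qed.

Hypothesis GD : @good d T.
Variable s : seq T.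

Fixpoint pred_iter (k : nat) (p : T) : Prop :=
  if k is k'.+1 then exists2 q, pred_iter k' q & predecessor p q else p \in s.

Definition pred_ideal (k : nat) (x : T) : Prop := exists2 p, pred_iter k p & x <= p.

Lemma finite_pred_iter k : finite_sub (pred_iter k).
Proof.
elim: k => [|k IH]; first by exists s.
have [t tP] := finite_sub_enum IH.
apply: (finite_subS (B := fun x => exists2 q, q \in t & predecessor x q)).
  by move=> x [q /tP qt pred_xq]; exists q.
apply: finite_sub_bigcup => q _.
have [min_q|nmin_q] := classic (minimal q); last exact: (GD.1 q nmin_q).2.
by exists [::] => x [x_q _]; case: min_q; exists x.
Qed.

Lemma fg_pred_ideal k : fg_ideal (pred_ideal k).
Proof.
have [t tP] := finite_sub_enum (finite_pred_iter k).
by exists t => x; split=> [[p /tP]|[l /tP]]; [exists p|exists l].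
Qed.

Lemma pred_ideal_succ k x : pred_ideal k.+1 x -> pred_ideal k x.
Proof. by move=> [p [q Pq [p_q _]] x_p]; exists q; rewrite ?(le_trans x_p (ltW p_q)). Qed.

Lemma pred_ideal_diff_maximal k x : pred_ideal k x -> ~ pred_ideal k.+1 x ->
  forall z, pred_ideal k z -> x <= z -> z = x.
Proof.
move=> _ nCx z [p Pp z_p]; rewrite le_eqVlt => /predU1P [//|x_z].
have [p' [pred_p' x_p']] := GD.2 x p (lt_le_trans x_z z_p).
by case: nCx; exists p' => //; exists p.
Qed.

Lemma pred_ideal_diff_iter k x : pred_ideal k x -> ~ pred_ideal k.+1 x -> pred_iter k x.
Proof.
move=> Cx nCx; case: (Cx) => p Pp x_p.
by rewrite -(pred_ideal_diff_maximal Cx nCx (z := p)) //; exists p.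
Qed.

Lemma pred_iter_chain k p : pred_iter k p ->
  exists2 l, l \in s & exists c : seq T,
    [/\ size c = k.+1, uniq c, p \in c & forall y, y \in c -> p <= y <= l].
Proof.
elim: k p => [|k IH] p.
  move=> ps; exists p => //; exists [:: p]; split; rewrite ?mem_head //.
  by move=> y /[!inE] /eqP->; rewrite lexx.
move=> [q /IH [l ls [c [size_c uniq_c qc c_in]]] [p_q _]].
have le_pq y : q <= y -> p <= y by move/(le_trans (ltW p_q)).
have /andP[_ q_l] := c_in q qc.
exists l => //; exists (p :: c); split; rewrite ?mem_head /= ?size_c //.
  rewrite uniq_c andbT; apply/negP => /c_in /andP[/(lt_le_trans p_q)].
  by rewrite ltxx.
move=> y /predU1P [->|/c_in /andP[q_y ->]]; last by rewrite le_pq.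
by rewrite lexx le_pq.
Qed.

Lemma pred_ideal_leave x : exists k, ~ pred_ideal k x.
Proof.
have [L inL] : finite_sub (fun y => exists2 l, l \in s & x <= y <= l).
  by apply: finite_sub_bigcup => l _; apply: IF.
exists (size L) => [[p /pred_iter_chain [l ls [c [size_c uniq_c _ c_in]]] x_p]].
suff: (size c <= size L)%N by rewrite size_c ltnn.
apply: uniq_leq_size => // y /c_in /andP[p_y y_l].
by apply: inL; exists l; rewrite ?(le_trans x_p p_y).
Qed.

Lemma strong_chain_pred_ideal :
  strong_chain (fun x => exists2 l, l \in s & x <= l) pred_ideal.
Proof.
split; [split; [|split; [|split; [|split]]] | split].
- by move=> x; split=> [[p ps xp]|[l ls xl]]; [exists p|exists l].
- exact: fg_pred_ideal.
- exact: pred_ideal_succ.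
- move=> k; apply: (finite_subS (B := pred_iter k)); last exact: finite_pred_iter.
  by move=> x []; apply: pred_ideal_diff_iter.
- exact: pred_ideal_leave.
- by move=> k x Cx nCx; split=> //; apply: pred_ideal_diff_maximal.
- by move=> k x y Cx nCx Cy _ x_y; rewrite (pred_ideal_diff_maximal Cx nCx Cy x_y).
Qed.

End PredecessorChains.

Section ChainsToGood.
Local Open Scope order_scope.
Context {d : Order.disp_t} {T : porderType d}.
Hypothesis chains : forall G : T -> Prop, fg_ideal G -> exists C, good_chain G C.

Lemma interval_finite_of_chains : @interval_finite d T.
Proof.
move=> mu lam; have [C chainC] := chains (fg_ideal_downset lam).
have [k nCk] := chainC.2.2.2.2 mu.
apply: finite_subS (good_chain_diff_finite chainC k) => x /andP[mu_x x_lam].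
split=> // Ckx; apply: nCk; exact: fg_idealW (chainC.2.1 k) _ _ mu_x Ckx.
Qed.

Lemma finite_predecessors_of_chains (lam : T) : finite_sub (fun mu => predecessor mu lam).
Proof.
have [C chainC] := chains (fg_ideal_downset lam).
have [j [Cj nCj]] := good_chain_leave chainC (lexx lam).
have [D inD] := chainC.2.2.2.1 j.
have [t gen_t] := chainC.2.1 j.+1.
exists (D ++ t) => p [p_lam no_pi]; rewrite mem_cat.
have Cjp : C j p by apply: fg_idealW (chainC.2.1 j) _ _ (ltW p_lam) Cj.
have [Cp|nCp] := classic (C j.+1 p); last by rewrite inD.
have [l l_t p_l] := (gen_t p).1 Cp.
have l_lam : l < lam.
  have Cl : C j.+1 l by apply/gen_t; exists l.
  rewrite lt_neqAle (good_chain_sub0 chainC Cl) andbT.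
  by apply: contraPneq nCj => <-.
move: p_l; rewrite le_eqVlt => /predU1P [->|p_l]; first by rewrite l_t orbT.
by case: no_pi; exists l; rewrite p_l l_lam.
Qed.

Lemma good_of_chains : @good d T.
Proof.
have IF := interval_finite_of_chains.
split; last exact: interval_finite_predecessor.
move=> lam nmin_lam; split; last exact: finite_predecessors_of_chains.
apply: NNPP => no_pred; apply: nmin_lam => -[mu mu_lam].
have [lam' [pred_lam' _]] := interval_finite_predecessor IF mu_lam.
by apply: no_pred; exists lam'.
Qed.

End ChainsToGood.

Theorem proposition2p3 (d : Order.disp_t) (T : porderType d) :
  ((@interval_finite d T /\ @good d T) <->
     (forall G : T -> Prop, fg_ideal G -> exists C, good_chain G C))
  /\
  ((@interval_finite d T /\ @good d T) ->
     (forall G : T -> Prop, fg_ideal G -> exists C, strong_chain G C)).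
Proof.
have strong : @interval_finite d T /\ @good d T ->
    forall G : T -> Prop, fg_ideal G -> exists C, strong_chain G C.
  move=> [IF GD] G [s Gs]; exists (pred_ideal s).
  have [[C0 chain] strongC] := strong_chain_pred_ideal IF GD s.
  by split=> //; split=> // x; rewrite C0 Gs.
split=> //; split.
- by move=> IFGD G fgG; have [C [chainC _]] := strong IFGD G fgG; exists C.
- by move=> chains; split; [apply: interval_finite_of_chains | apply: good_of_chains].
Qed.
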